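(* Assume the two-system setup, let $x_2^s$ be a steady-state map and $(x_1^s,x_2^s(x_1^s))$ a steady state. Then the Jacobian $J$ of the vector field of the predictive-sensitivity system at $(x_1^s,x_2^s(x_1^s))$ is similar to $$\begin{bmatrix}\nabla_{x_1}f_1^r(x_1^s) & \nabla_{x_2}f_1(x_1^s,x_2^s(x_1^s))\\ 0 & \nabla_{x_2}f_2(x_1^s,x_2^s(x_1^s))\end{bmatrix}.$$
   Context: Two-system setup: Let $f_1:\mathbb{R}^{n_1}\times\mathbb{R}^{n_2}\to\mathbb{R}^{n_1}$ and $f_2:\mathbb{R}^{n_1}\times\mathbb{R}^{n_2}\to\mathbb{R}^{n_2}$ be continuously differentiable, and assume $\nabla_{x_2}f_2(x_1,x_2)$ is invertible for all $(x_1,x_2)$. Define the extended sensitivity $S_{x_1}^{x_2}(x_1,x_2):=-\nabla_{x_2}f_2(x_1,x_2)^{-1}\nabla_{x_1}f_2(x_1,x_2)\in\mathbb{R}^{n_2\times n_1}$. The predictive-sensitivity system is $$\begin{bmatrix} I&0\\ -S_{x_1}^{x_2}(x_1,x_2)&I\end{bmatrix}\begin{bmatrix}\dot x_1\\ \dot x_2\end{bmatrix}=\begin{bmatrix}f_1(x_1,x_2)\\ f_2(x_1,x_2)\end{bmatrix},$$ i.e. $\dot x_1=f_1(x_1,x_2)$, $\dot x_2=f_2(x_1,x_2)+S_{x_1}^{x_2}(x_1,x_2)f_1(x_1,x_2)$; it is assumed that this right-hand side is locally Lipschitz continuous. A steady-state map is a continuously differentiable map $x_2^s$ defined on an open set $U\subseteq\mathbb{R}^{n_1}$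 with $f_2(x_1,x_2^s(x_1))=0$ for all $x_1\in U$ (then $\nabla_{x_1}x_2^s(x_1)=S_{x_1}^{x_2}(x_1,x_2^s(x_1))$). The reduced vector field is $f_1^r(x_1):=f_1(x_1,x_2^s(x_1))$, with Jacobian $\nabla_{x_1}f_1^r(x_1)=\nabla_{x_1}f_1(x_1,x_2^s(x_1))+\nabla_{x_2}f_1(x_1,x_2^s(x_1))\nabla_{x_1}x_2^s(x_1)$. A steady state is a point $(x_1^s,x_2^s(x_1^s))$ with $f_1^r(x_1^s)=0$. *)

From HB Require Import structures.
From mathcomp Require Import all_boot all_order all_algebra.
From mathcomp Require Import all_classical all_reals all_analysis.
Set Implicit Arguments. Unset Strict Implicit. Unset Printing Implicit Defensive.
Import Order.TTheory GRing.Theory Num.Theory.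
Import numFieldNormedType.Exports.
Local Open Scope classical_set_scope.
Local Open Scope ring_scope.

(* MathComp-Analysis' [jacobian f p]
   is the matrix M with ('d f p) v = v *m M, i.e. the TRANSPOSE of the usual
   Jacobian.  [jac f p] is the usual (m x n) Jacobian matrix of f : R^n -> R^m. *)
Definition jac {R : realType} (n m : nat) (f : 'rV[R]_n -> 'rV[R]_m) (p : 'rV[R]_n)
  : 'M[R]_(m, n) := (jacobian f p)^T.

Definition uncurry2 {R : realType} (n1 n2 k : nat)
  (f : 'rV[R]_n1 -> 'rV[R]_n2 -> 'rV[R]_k) (z : 'rV[R]_(n1 + n2)) : 'rV[R]_k :=
  f (lsubmx z) (rsubmx z).

Definition C1 {R : realType} (n m : nat) (f : 'rV[R]_n -> 'rV[R]_m) : Prop :=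
  (forall z, differentiable f z) /\ continuous (fun z => jac f z).

Definition C1_on {R : realType} (n m : nat) (U : set 'rV[R]_n)
  (f : 'rV[R]_n -> 'rV[R]_m) : Prop :=
  forall x, U x -> differentiable f x /\ {for x, continuous (fun z => jac f z)}.

Definition locally_lipschitz {R : realType} (n m : nat) (g : 'rV[R]_n -> 'rV[R]_m) : Prop :=
  forall z, exists2 r : R, 0 < r & exists L : R,
    forall a b, ball z r a -> ball z r b -> `|g a - g b| <= L * `|a - b|.

Definition mx_similar {R : realType} (n : nat) (A B : 'M[R]_n) : Prop :=
  exists2 P : 'M[R]_n, P \in unitmx & A = P *m B *m invmx P.

Definition jac_x1 {R : realType} (n1 n2 k : nat)
  (f : 'rV[R]_n1 -> 'rV[R]_n2 -> 'rV[R]_k) x1 x2 : 'M[R]_(k, n1) :=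
  jac (fun y => f y x2) x1.
Definition jac_x2 {R : realType} (n1 n2 k : nat)
  (f : 'rV[R]_n1 -> 'rV[R]_n2 -> 'rV[R]_k) x1 x2 : 'M[R]_(k, n2) :=
  jac (fun y => f x1 y) x2.

Definition sens {R : realType} (n1 n2 : nat)
  (f2 : 'rV[R]_n1 -> 'rV[R]_n2 -> 'rV[R]_n2) x1 x2 : 'M[R]_(n2, n1) :=
  - (invmx (jac_x2 f2 x1 x2) *m jac_x1 f2 x1 x2).

(* Right-hand side of the predictive-sensitivity system, on R^(n1+n2):
   (x1,x2) |-> (f1(x1,x2), f2(x1,x2) + S(x1,x2) f1(x1,x2))
   (the product S f1 of column vectors is written with transposes). *)
Definition ps_field {R : realType} (n1 n2 : nat)
  (f1 : 'rV[R]_n1 -> 'rV[R]_n2 -> 'rV[R]_n1)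
  (f2 : 'rV[R]_n1 -> 'rV[R]_n2 -> 'rV[R]_n2) (z : 'rV[R]_(n1 + n2))
  : 'rV[R]_(n1 + n2) :=
  let x1 := lsubmx z in let x2 := rsubmx z in
  row_mx (f1 x1 x2) (f2 x1 x2 + (sens f2 x1 x2 *m (f1 x1 x2)^T)^T).

From HB Require Import structures.
From mathcomp Require Import all_boot all_order all_algebra.
From mathcomp Require Import all_classical all_reals all_analysis.
From mathcomp Require Import ring.
Import Order.TTheory GRing.Theory Num.Theory.
Import numFieldNormedType.Exports.
Local Open Scope classical_set_scope.
Local Open Scope ring_scope.
Set Implicit Arguments. Unset Strict Implicit. Unset Printing Implicit Defensive.

(* Writing E := [0 I], the vector field of the system factors (in row-vector
   form) as  F(z) = f1(z) K(z) + f2(z) E  with the gain K(z) := [I  S(z)^T],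
   where S is the extended sensitivity.  At a steady state f1 vanishes, so the
   product rule only needs K to be continuous (it is, since S is built from the
   continuous partial Jacobians of f2 and matrix inversion is continuous); hence
     J = [[A11, A12], [S A11 + B21, S A12 + B22]]
   with A = grad f1, B = grad f2 split along (x1, x2).  Differentiating the
   steady-state identity f2(x1, x2s(x1)) = 0 gives B21 + B22 X = 0 for
   X = grad x2s, so S = X, and conjugating by the unipotent block matrix
   [[I, 0], [X, I]] turns J into the block-triangular matrix of the claim,
   whose upper-left block is the reduced Jacobian A11 + A12 X. *)

Section matrix_limits.
Context {R : realType} {T : Type} (F : set_system T) {FF : Filter F}.

Lemma cvg_mx_entries m n (g : T -> 'M[R]_(m, n)) (M : 'M[R]_(m, n)) :
  (forall i j, (fun t => g t i j) @ F --> M i j) -> g @ F --> M.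
Proof.
move=> gM A [P MP sPA]; apply: (filterS (fun t Pt => sPA (g t) Pt)).
apply: filter_forall => i; apply: filter_forall => j.
exact: (gM i j _ (MP i j)).
Qed.

Lemma cvg_entry m n (g : T -> 'M[R]_(m, n)) (M : 'M[R]_(m, n)) i j :
  g @ F --> M -> (fun t => g t i j) @ F --> M i j.
Proof.
by move=> gM; apply: (continuous_cvg _ (@coord_continuous R m n i j M) gM).
Qed.

Lemma cvg_mulmx m k n (A : T -> 'M[R]_(m, k)) (B : T -> 'M[R]_(k, n))
    (A0 : 'M[R]_(m, k)) (B0 : 'M[R]_(k, n)) :
  A @ F --> A0 -> B @ F --> B0 -> (fun t => A t *m B t) @ F --> A0 *m B0.
Proof.
move=> AA0 BB0; apply: cvg_mx_entries => i j; rewrite mxE.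
under eq_fun do rewrite mxE.
apply: cvg_big => // [|l _]; first exact: add_continuous.
by apply: cvgM; exact: cvg_entry.
Qed.

Lemma cvg_trmx m n (A : T -> 'M[R]_(m, n)) (A0 : 'M[R]_(m, n)) :
  A @ F --> A0 -> (fun t => (A t)^T) @ F --> A0^T.
Proof.
move=> AA0; apply: cvg_mx_entries => i j; rewrite mxE.
under eq_fun do rewrite mxE.
exact: cvg_entry.
Qed.

Lemma cvg_row_mx m k1 k2 (A : T -> 'M[R]_(m, k1)) (B : T -> 'M[R]_(m, k2))
    (A0 : 'M[R]_(m, k1)) (B0 : 'M[R]_(m, k2)) :
  A @ F --> A0 -> B @ F --> B0 ->
  (fun t => row_mx (A t) (B t)) @ F --> row_mx A0 B0.
Proof.
move=> AA0 BB0.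
have rowE (C : 'M[R]_(m, k1)) (D : 'M[R]_(m, k2)) :
    row_mx C D = C *m row_mx 1%:M 0 + D *m row_mx 0 1%:M.
  by rewrite !mul_mx_row !mulmx1 !mulmx0 add_row_mx addr0 add0r.
rewrite rowE (funext (fun t => rowE (A t) (B t))).
by apply: cvgD; apply: cvg_mulmx => //; exact: cvg_cst.
Qed.

(* The determinant and the adjugate are polynomial in the entries. *)
Lemma cvg_det n (A : T -> 'M[R]_n) (A0 : 'M[R]_n) :
  A @ F --> A0 -> (fun t => \det (A t)) @ F --> \det A0.
Proof.
move=> AA0; apply: cvg_big => // [|s _]; first exact: add_continuous.
apply: cvgM; first exact: cvg_cst.
apply: cvg_big => // [|i _]; first exact: mul_continuous.
exact: cvg_entry.
Qed.

Lemma cvg_adj n (A : T -> 'M[R]_n) (A0 : 'M[R]_n) :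
  A @ F --> A0 -> (fun t => \adj (A t)) @ F --> \adj A0.
Proof.
move=> AA0; apply: cvg_mx_entries => i j; rewrite mxE.
under eq_fun do rewrite mxE.
apply: cvgM; first exact: cvg_cst.
apply: cvg_det; apply: cvg_mx_entries => k l; rewrite !mxE.
under eq_fun do rewrite !mxE.
exact: cvg_entry.
Qed.

(* Inversion is continuous at an invertible matrix, by Cramer's rule
   invmx A = (det A)^-1 adj A, valid near the limit since det stays nonzero. *)
Lemma cvg_invmx n (A : T -> 'M[R]_n) (A0 : 'M[R]_n) :
  A0 \in unitmx -> A @ F --> A0 -> (fun t => invmx (A t)) @ F --> invmx A0.
Proof.
move=> uA0 AA0.
have detA := cvg_det AA0.
have detA0 : \det A0 != 0 by rewrite -unitfE -unitmxE.
have cramer : (fun t => (\det (A t))^-1 *: \adj (A t)) @ F --> invmx A0.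
  by rewrite /invmx uA0; apply: cvgZ; [exact: cvgV | exact: cvg_adj].
apply: cvg_trans cramer; apply: near_eq_cvg.
near=> t; rewrite /invmx unitmxE unitfE.
by have -> : \det (A t) != 0 by near: t; exact: cvgr_neq0 detA detA0.
Unshelve. all: by end_near. Qed.

End matrix_limits.

Section matrix_norm.
Variable R : realType.

(* Every entry is bounded by the (entrywise maximum) norm. *)
Lemma mx_entry_le m n (A : 'M[R]_(m, n)) i j : `|A i j| <= `|A|.
Proof.
rewrite [leRHS]/Num.Def.normr /= mx_normrE.
by apply/bigmax_geP; right; exists (i, j).
Qed.

Lemma mulmx_norm_le m k n (A : 'M[R]_(m, k)) (B : 'M[R]_(k, n)) :
  `|A *m B| <= k%:R * `|A| * `|B|.
Proof.
rewrite [leLHS]/Num.Def.normr /= mx_normrE.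
apply: bigmax_le => [|[i j] _]; first by rewrite !mulr_ge0.
rewrite mxE /=; apply: le_trans (ler_norm_sum _ _ _) _.
rewrite -mulrA -[k in k%:R]card_ord mulr_natl -sumr_const.
apply: ler_sum => l _; rewrite normrM.
by apply: ler_pM => //; exact: mx_entry_le.
Qed.

(* Right multiplication by a fixed matrix is continuous, hence a bounded
   linear map; this is what makes it a legitimate differential. *)
Lemma mulmxr_continuous k n m (M : 'M[R]_(n, m)) :
  continuous (fun h : 'M[R]_(k, n) => h *m M).
Proof.
move=> h.
exact: (@cvg_mulmx R _ (nbhs h) _ _ _ _ id (fun=> M) h M cvg_id (cvg_cst _)).
Qed.

End matrix_norm.

Section jacobian_calculus.
Variable R : realType.

Definition is_jacobian n m (f : 'rV[R]_n -> 'rV[R]_m) x (M : 'M[R]_(n, m)) :=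
  differentiable f x /\ jacobian f x = M.

Lemma diff_jacobian n m (f : 'rV[R]_n -> 'rV[R]_m) x h :
  'd f x h = h *m jacobian f x.
Proof. by rewrite /jacobian mul_rV_lin1. Qed.

Lemma jacobian_eq n m (f : 'rV[R]_n -> 'rV[R]_m) x (M : 'M[R]_(n, m)) :
  (forall h, 'd f x h = h *m M) -> jacobian f x = M.
Proof.
by move=> dfM; apply/row_matrixP => i; rewrite !rowE -diff_jacobian dfM.
Qed.

Lemma is_jacobianP n m (f : 'rV[R]_n -> 'rV[R]_m) x :
  differentiable f x -> is_jacobian f x (jacobian f x).
Proof. by []. Qed.

Lemma is_jacobian_of_bound n m (f : 'rV[R]_n -> 'rV[R]_m) x M :
  (forall e : R, 0 < e -> \forall h \near (0 : 'rV[R]_n),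
     `|f (h + x) - f x - h *m M| <= e * `|h|) ->
  is_jacobian f x M.
Proof.
move=> fM.
have foL : f \o shift x = cst (f x) + mulmxr M +o_ (0 : 'rV[R]_n) id.
  apply/eqaddoP => e e0; near=> h.
  by rewrite /= !fctE opprD addrA; near: h; exact: fM.
have dfL : 'd f x = mulmxr M :> (_ -> _).
  by apply: diff_unique => //; exact: mulmxr_continuous.
have df : differentiable f x.
  by apply/diff_locallyP; rewrite dfL; split => //; exact: mulmxr_continuous.
by split => //; apply: jacobian_eq => h; rewrite dfL.
Unshelve. all: by end_near. Qed.

Lemma jacobian_bound n m (f : 'rV[R]_n -> 'rV[R]_m) x :
  differentiable f x -> forall e : R, 0 < e ->
  \forall h \near (0 : 'rV[R]_n),
    `|f (h + x) - f x - h *m jacobian f x| <= e * `|h|.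
Proof.
move=> /diff_locally /eqaddoP fo e e0; have := fo e e0.
by apply: filterS => h; rewrite /= !fctE opprD addrA diff_jacobian.
Qed.

Lemma is_jacobian_lin n m (M : 'M[R]_(n, m)) x : is_jacobian (mulmxr M) x M.
Proof.
apply: is_jacobian_of_bound => e e0; near=> h.
by rewrite /= mulmxDl addrK subrr normr0 mulr_ge0 // ltW.
Unshelve. all: by end_near. Qed.

Lemma is_jacobian_cst n m (c : 'rV[R]_m) (x : 'rV[R]_n) :
  is_jacobian (cst c) x 0.
Proof.
apply: is_jacobian_of_bound => e e0; near=> h.
by rewrite mulmx0 !subrr normr0 mulr_ge0 // ltW.
Unshelve. all: by end_near. Qed.

Lemma is_jacobian_id n (x : 'rV[R]_n) : is_jacobian id x 1%:M.
Proof.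
have idE : mulmxr (1%:M : 'M[R]_n) = id :> ('rV[R]_n -> 'rV[R]_n).
  by apply: funext => h /=; rewrite mulmx1.
by rewrite -idE; exact: is_jacobian_lin.
Qed.

Lemma is_jacobianD n m (f g : 'rV[R]_n -> 'rV[R]_m) x A B :
  is_jacobian f x A -> is_jacobian g x B -> is_jacobian (f + g) x (A + B).
Proof.
move=> [df <-] [dg <-]; split; first exact: differentiableD.
apply: jacobian_eq => h; rewrite diffD // mulmxDr.
by congr (_ + _); exact: diff_jacobian.
Qed.

(* Chain rule (in row-vector form the factors appear in diagram order). *)
Lemma is_jacobian_comp n m k (g : 'rV[R]_n -> 'rV[R]_m)
    (f : 'rV[R]_m -> 'rV[R]_k) x A B :
  is_jacobian g x A -> is_jacobian f (g x) B -> is_jacobian (f \o g) x (A *m B).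
Proof.
move=> [dg <-] [df <-]; split; first exact: differentiable_comp.
apply: jacobian_eq => h; rewrite diff_comp // mulmxA.
by rewrite -(diff_jacobian g x h); exact: diff_jacobian.
Qed.

Lemma is_jacobian_mulmxr n m k (f : 'rV[R]_n -> 'rV[R]_m) (M : 'M[R]_(m, k))
    x A :
  is_jacobian f x A -> is_jacobian (fun y => f y *m M) x (A *m M).
Proof. by move=> fA; exact: (is_jacobian_comp fA (is_jacobian_lin M _)). Qed.

Lemma is_jacobian_row_mx n m1 m2 (a : 'rV[R]_n -> 'rV[R]_m1)
    (b : 'rV[R]_n -> 'rV[R]_m2) x A B :
  is_jacobian a x A -> is_jacobian b x B ->
  is_jacobian (fun y => row_mx (a y) (b y)) x (row_mx A B).
Proof.
move=> aA bB.
have splitE : (fun y => row_mx (a y) (b y)) =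
    (fun y => a y *m row_mx 1%:M 0) + (fun y => b y *m row_mx 0 1%:M).
  apply: funext => y.
  change (row_mx (a y) (b y) = a y *m row_mx 1%:M (0 : 'M[R]_(m1, m2))
              + b y *m row_mx (0 : 'M[R]_(m2, m1)) 1%:M).
  by rewrite !mul_mx_row !mulmx1 !mulmx0 add_row_mx addr0 add0r.
rewrite splitE.
have := is_jacobianD (is_jacobian_mulmxr (row_mx 1%:M 0) aA)
  (is_jacobian_mulmxr (row_mx 0 1%:M) bB).
by rewrite !mul_mx_row !mulmx1 !mulmx0 add_row_mx addr0 add0r.
Qed.

(* The remainder splits as
   (a(x+h) - h J) K(x+h) + h J (K(x+h) - K(x)), both o(|h|). *)
Lemma is_jacobian_mul_vanishing n m k (a : 'rV[R]_n -> 'rV[R]_m)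
    (K : 'rV[R]_n -> 'M[R]_(m, k)) x :
  differentiable a x -> a x = 0 -> K @ x --> K x ->
  is_jacobian (fun z => a z *m K z) x (jacobian a x *m K x).
Proof.
move=> da ax0 cK; set J := jacobian a x.
apply: is_jacobian_of_bound => e e0.
pose c : R := m%:R * (`|K x| + 1 + n%:R * `|J|) + 1.
have c0 : 0 < c by rewrite ltr_wpDl // !mulr_ge0 // !addr_ge0 // mulr_ge0.
have := divr_gt0 e0 c0; set d := e / c => d0.
have cKs : (K \o shift x) @ (0 : 'rV[R]_n) --> K x.
  by rewrite cvg_comp_shift add0r.
near=> h; set Kh := K (h + x).
have Kh1 : `|Kh - K x| <= 1.
  by rewrite /Kh distrC; near: h; exact: (cvgr_dist_le _ _ cKs _ ltr01).
have Khd : `|Kh - K x| <= d.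
  by rewrite /Kh distrC; near: h; exact: (cvgr_dist_le _ _ cKs _ d0).
have ra : `|a (h + x) - h *m J| <= d * `|h|.
  by rewrite -[a (h + x)]subr0 -ax0; near: h; exact: jacobian_bound.
have Kh_le : `|Kh| <= `|K x| + 1.
  have -> : Kh = K x + (Kh - K x) by rewrite addrC subrK.
  by apply: le_trans (ler_normD _ _) _; rewrite lerD2l.
have t1 : `|(a (h + x) - h *m J) *m Kh| <= m%:R * (d * `|h|) * (`|K x| + 1).
  apply: le_trans (mulmx_norm_le _ _) _.
  by apply: ler_pM => //; exact: ler_wpM2l.
have t2 : `|(h *m J) *m (Kh - K x)| <= m%:R * (n%:R * `|h| * `|J|) * d.
  apply: le_trans (mulmx_norm_le _ _) _.
  by apply: ler_pM => //; apply: ler_wpM2l => //; exact: mulmx_norm_le.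
have -> : a (h + x) *m Kh - a x *m K x - h *m (J *m K x) =
    (a (h + x) - h *m J) *m Kh + (h *m J) *m (Kh - K x).
  by rewrite ax0 mul0mx subr0 mulmxBl mulmxBr mulmxA addrA subrK.
apply: le_trans (ler_normD _ _) _; apply: le_trans (lerD t1 t2) _.
have -> : m%:R * (d * `|h|) * (`|K x| + 1) + m%:R * (n%:R * `|h| * `|J|) * d =
    d * `|h| * (c - 1) by rewrite /c; ring.
rewrite (_ : e * `|h| = d * `|h| * c); last first.
  by rewrite /d mulrAC divfK // gt_eqF.
by apply: ler_wpM2l; [exact: mulr_ge0 (ltW d0) (normr_ge0 _) | rewrite gerBl].
Unshelve. all: by end_near. Qed.

Lemma jacobian_locally_zero n m (f : 'rV[R]_n -> 'rV[R]_m) x :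
  differentiable f x -> (\forall y \near x, f y = 0) -> jacobian f x = 0.
Proof.
move=> df f0; apply/row_matrixP => i; rewrite rowE row0 -deriveEjacobian //.
have f0cst : \forall y \near x, f y = cst 0 y by [].
by rewrite (near_eq_derive _ f0cst) derive_cst.
Qed.

End jacobian_calculus.

Section two_system.
Variables (R : realType) (n1 n2 : nat).

Lemma is_jacobian_uncurry2 k n (f : 'rV[R]_n1 -> 'rV[R]_n2 -> 'rV[R]_k)
    (g1 : 'rV[R]_n -> 'rV[R]_n1) (g2 : 'rV[R]_n -> 'rV[R]_n2) x A1 A2 :
  is_jacobian g1 x A1 -> is_jacobian g2 x A2 ->
  differentiable (uncurry2 f) (row_mx (g1 x) (g2 x)) ->
  is_jacobian (fun y => f (g1 y) (g2 y)) x
    (A1 *m usubmx (jacobian (uncurry2 f) (row_mx (g1 x) (g2 x)))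
     + A2 *m dsubmx (jacobian (uncurry2 f) (row_mx (g1 x) (g2 x)))).
Proof.
move=> g1A g2A df.
have -> : (fun y => f (g1 y) (g2 y)) =
    uncurry2 f \o (fun y => row_mx (g1 y) (g2 y)).
  by apply: funext => y; rewrite /= /uncurry2 row_mxKl row_mxKr.
rewrite -mul_row_col vsubmxK.
exact: is_jacobian_comp (is_jacobian_row_mx g1A g2A) (is_jacobianP df).
Qed.

Lemma jac_x1E k (f : 'rV[R]_n1 -> 'rV[R]_n2 -> 'rV[R]_k) x1 x2 :
  differentiable (uncurry2 f) (row_mx x1 x2) ->
  jac_x1 f x1 x2 = lsubmx (jac (uncurry2 f) (row_mx x1 x2)).
Proof.
move=> df.
have [_ Jf] :=
  is_jacobian_uncurry2 (is_jacobian_id x1) (is_jacobian_cst x2 x1) df.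
by rewrite /jac_x1 /jac Jf mul1mx mul0mx addr0 trmx_usub.
Qed.

Lemma jac_x2E k (f : 'rV[R]_n1 -> 'rV[R]_n2 -> 'rV[R]_k) x1 x2 :
  differentiable (uncurry2 f) (row_mx x1 x2) ->
  jac_x2 f x1 x2 = rsubmx (jac (uncurry2 f) (row_mx x1 x2)).
Proof.
move=> df.
have [_ Jf] :=
  is_jacobian_uncurry2 (is_jacobian_cst x1 x2) (is_jacobian_id x2) df.
by rewrite /jac_x2 /jac Jf mul1mx mul0mx add0r trmx_dsub.
Qed.

Lemma jac_uncurry2E k (f : 'rV[R]_n1 -> 'rV[R]_n2 -> 'rV[R]_k) x1 x2 :
  differentiable (uncurry2 f) (row_mx x1 x2) ->
  (jacobian (uncurry2 f) (row_mx x1 x2))^T =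
    row_mx (jac_x1 f x1 x2) (jac_x2 f x1 x2).
Proof. by move=> df; rewrite (jac_x1E df) (jac_x2E df) hsubmxK. Qed.

Lemma jac_reduced k (f : 'rV[R]_n1 -> 'rV[R]_n2 -> 'rV[R]_k)
    (g : 'rV[R]_n1 -> 'rV[R]_n2) x :
  differentiable g x -> differentiable (uncurry2 f) (row_mx x (g x)) ->
  differentiable (fun y => f y (g y)) x /\
  jac (fun y => f y (g y)) x = jac_x1 f x (g x) + jac_x2 f x (g x) *m jac g x.
Proof.
move=> dg df.
have [dfg Jfg] := is_jacobian_uncurry2 (is_jacobian_id x) (is_jacobianP dg) df.
split => //; rewrite (jac_x1E df) (jac_x2E df) /jac Jfg mul1mx.
by rewrite -trmx_usub -trmx_dsub linearD /= trmx_mul.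
Qed.

End two_system.

Section predictive_sensitivity.
Variables (R : realType) (n1 n2 : nat).
Variables (f1 : 'rV[R]_n1 -> 'rV[R]_n2 -> 'rV[R]_n1)
          (f2 : 'rV[R]_n1 -> 'rV[R]_n2 -> 'rV[R]_n2).
Hypothesis f2_C1 : C1 (uncurry2 f2).
Hypothesis f2_unit : forall x1 x2, jac_x2 f2 x1 x2 \in unitmx.
Hypothesis f1_diff : forall z, differentiable (uncurry2 f1) z.

Lemma sens_continuous :
  continuous (fun z : 'rV[R]_(n1 + n2) => sens f2 (lsubmx z) (rsubmx z)).
Proof.
have [d2 c2] := f2_C1.
pose J w := jac (uncurry2 f2) w.
have sensE w :
    sens f2 (lsubmx w) (rsubmx w) = - (invmx (rsubmx (J w)) *m lsubmx (J w)).
  by rewrite /sens jac_x1E ?jac_x2E ?hsubmxK.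
move=> z; rewrite (funext sensE).
have cJr : (fun w => rsubmx (J w)) @ z --> rsubmx (J z).
  exact: (continuous_comp (c2 z) (@continuous_rsubmx _ _ _ _ _)).
have cJl : (fun w => lsubmx (J w)) @ z --> lsubmx (J z).
  exact: (continuous_comp (c2 z) (@continuous_lsubmx _ _ _ _ _)).
have uJr : rsubmx (J z) \in unitmx.
  by rewrite /J -[z in jac _ z]hsubmxK -jac_x2E ?hsubmxK.
exact: cvgN (cvg_mulmx (cvg_invmx uJr cJr) cJl).
Qed.

Definition ps_gain (z : 'rV[R]_(n1 + n2)) : 'M[R]_(n1, n1 + n2) :=
  row_mx 1%:M (sens f2 (lsubmx z) (rsubmx z))^T.

Lemma ps_fieldE z : ps_field f1 f2 z =
  uncurry2 f1 z *m ps_gain z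
  + uncurry2 f2 z *m row_mx (0 : 'M[R]_(n2, n1)) 1%:M.
Proof.
rewrite /ps_field /ps_gain /uncurry2 !mul_mx_row mulmx1 mulmx0 mulmx1.
rewrite add_row_mx.
by rewrite addr0 addrC trmx_mul trmxK.
Qed.

(* The gain is continuous, which is all the product rule needs. *)
Lemma ps_gain_continuous : continuous ps_gain.
Proof.
by move=> z; exact: cvg_row_mx (cvg_cst _) (cvg_trmx (@sens_continuous z)).
Qed.

Lemma ps_field_jacobian x1 x2 : f1 x1 x2 = 0 ->
  differentiable (ps_field f1 f2) (row_mx x1 x2) /\
  jac (ps_field f1 f2) (row_mx x1 x2) =
    block_mx (jac_x1 f1 x1 x2) (jac_x2 f1 x1 x2)
      (sens f2 x1 x2 *m jac_x1 f1 x1 x2 + jac_x1 f2 x1 x2)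
      (sens f2 x1 x2 *m jac_x2 f1 x1 x2 + jac_x2 f2 x1 x2).
Proof.
move=> f1x0; set p := row_mx x1 x2.
have f1p0 : uncurry2 f1 p = 0 by rewrite /uncurry2 row_mxKl row_mxKr.
have psE : ps_field f1 f2 = (fun z => uncurry2 f1 z *m ps_gain z)
    + (fun z => uncurry2 f2 z *m row_mx (0 : 'M[R]_(n2, n1)) 1%:M).
  by apply: funext => z; rewrite ps_fieldE.
have [dps Jps] := is_jacobianD
  (is_jacobian_mul_vanishing (f1_diff p) f1p0 (@ps_gain_continuous p))
  (is_jacobian_mulmxr (row_mx 0 1%:M) (is_jacobianP (f2_C1.1 p))).
rewrite psE; split => //.
rewrite /jac Jps linearD /= !trmx_mul.
rewrite (jac_uncurry2E (f1_diff p)) (jac_uncurry2E (f2_C1.1 p)).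
rewrite /ps_gain /p row_mxKl row_mxKr.
rewrite !tr_row_mx trmxK !tr_scalar_mx trmx0 !mul_col_row add_block_mx.
by rewrite !mul1mx !mul0mx !addr0.
Qed.

End predictive_sensitivity.

Section steady_state_algebra.
Variables (R : realType) (n1 n2 : nat).

Lemma sens_steady (B21 : 'M[R]_(n2, n1)) (B22 : 'M[R]_n2)
    (X : 'M[R]_(n2, n1)) :
  B22 \in unitmx -> B21 + B22 *m X = 0 -> - (invmx B22 *m B21) = X.
Proof.
move=> uB hX; have -> : B21 = - (B22 *m X) by apply/eqP; rewrite -addr_eq0 hX.
by rewrite mulmxN opprK mulmxA mulVmx // mul1mx.
Qed.

(* Conjugation by P = [[I, 0], [X, I]] (inverse [[I, 0], [-X, I]]) block-
   triangularizes the linearization once B21 = - B22 X. *)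
Lemma steady_block_similar (A11 : 'M[R]_n1) (A12 : 'M[R]_(n1, n2))
    (B21 : 'M[R]_(n2, n1)) (B22 : 'M[R]_n2) (X : 'M[R]_(n2, n1)) :
  B21 + B22 *m X = 0 ->
  mx_similar (block_mx A11 A12 (X *m A11 + B21) (X *m A12 + B22))
             (block_mx (A11 + A12 *m X) A12 0 B22).
Proof.
move=> hX; have B21E : B21 = - (B22 *m X) by apply/eqP; rewrite -addr_eq0 hX.
pose P : 'M[R]_(n1 + n2) := block_mx 1%:M 0 X 1%:M.
pose Q : 'M[R]_(n1 + n2) := block_mx 1%:M 0 (- X) 1%:M.
have PQ : P *m Q = 1%:M.
  rewrite /P /Q mulmx_block !mulmx1 !mul1mx !mulmx0 !mul0mx !addr0 !add0r subrr.
  by rewrite -scalar_mx_block.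
have [uP _] := mulmx1_unit PQ.
have PinvE : invmx P = Q.
  by rewrite -[invmx P]mulmx1 -PQ mulmxA mulVmx // mul1mx.
exists P => //; rewrite PinvE /P /Q !mulmx_block.
rewrite !mulmx1 !mul1mx !mulmx0 !mul0mx !addr0 !add0r B21E.
congr block_mx; first by rewrite mulmxN addrK.
by rewrite mulmxDr mulmxN mulmxDl opprD !mulmxA addrA addrK.
Qed.

End steady_state_algebra.

Unset Implicit Arguments.

Theorem proposition2 (R : realType) (n1 n2 : nat)
  (f1 : 'rV[R]_n1 -> 'rV[R]_n2 -> 'rV[R]_n1)
  (f2 : 'rV[R]_n1 -> 'rV[R]_n2 -> 'rV[R]_n2)
  (U : set 'rV[R]_n1) (x2s : 'rV[R]_n1 -> 'rV[R]_n2) (x1s : 'rV[R]_n1) :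
  C1 (uncurry2 f1) ->
  C1 (uncurry2 f2) ->
  (forall x1 x2, jac_x2 f2 x1 x2 \in unitmx) ->
  locally_lipschitz (ps_field f1 f2) ->
  open U ->
  C1_on U x2s ->
  (forall x1, U x1 -> f2 x1 (x2s x1) = 0) ->
  U x1s ->
  f1 x1s (x2s x1s) = 0 ->
  let p := row_mx x1s (x2s x1s) in
  differentiable (ps_field f1 f2) p /\
  mx_similar (jac (ps_field f1 f2) p)
    (block_mx (jac (fun x1 => f1 x1 (x2s x1)) x1s) (jac_x2 f1 x1s (x2s x1s))
              0 (jac_x2 f2 x1s (x2s x1s))).
Proof.
move=> [f1_diff _] f2_C1 f2_unit _ U_open x2s_C1 x2s_steady x1s_U f1_steady p.
have x2s_diff : differentiable x2s x1s := (x2s_C1 x1s x1s_U).1.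
have [ps_diff ps_jac] := ps_field_jacobian f2_C1 f2_unit f1_diff f1_steady.
split => //.
have [_ reduced1] := jac_reduced x2s_diff (f1_diff p).
have [reduced2_diff reduced2] := jac_reduced x2s_diff (f2_C1.1 p).
have steady2 :
    jac_x1 f2 x1s (x2s x1s) + jac_x2 f2 x1s (x2s x1s) *m jac x2s x1s = 0.
  rewrite -reduced2 /jac (jacobian_locally_zero reduced2_diff) ?trmx0 //.
  apply: filterS (open_nbhs_nbhs (conj U_open x1s_U)) => y.
  exact: x2s_steady.
rewrite ps_jac reduced1 /sens (sens_steady (f2_unit _ _) steady2).
exact: steady_block_similar.
Qed.
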